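(* Fix $k\ge1$. For every $k$-bounded partition $\lambda$, the image of the dual $k$-Schur function $\mathfrak{S}^{(k)}_\lambda$ in $\mathsf{QSym}^{(k)}$ satisfies $$\mathfrak{S}^{(k)}_\lambda=\sum_{\substack{\alpha\ k\text{-bounded}\\ \lambda(\alpha)=\lambda}}\mathcal{S}^{(k)}_\alpha .$$
   Context: Compositions are finite sequences of positive integers (possibly empty $\emptyset$); $k$-bounded means all parts $\le k$; $\lambda(\alpha)$ is the partition obtained by sorting the parts of $\alpha$. $\mathsf{Sym}^{(k)}$ is the quotient of the ring of symmetric functions $\mathsf{Sym}$ by the ideal generated by the monomial symmetric functions $m_\mu$ with $\mu$ not $k$-bounded; $\mathsf{Sym}_{(k)}=\mathbb{Q}[h_1,\dots,h_k]$; they are paired by $\langle m_\lambda,h_\mu\rangle=\delta_{\lambda,\mu}$ ($\lambda,\mu$ $k$-bounded). $\mathsf{QSym}^{(k)}$ is the quotient of $\mathsf{QSym}$ by the ideal generated by monomial quasi-symmetric functions $M_\alpha$ with some part $>k$; $\mathsf{NSym}_{(k)}$ is the subalgebra of $\mathbb{Q}\langle H_1,H_2,\dots\rangle$ generated by $H_1,\dots,H_k$; they are paired by $\langle M_\alpha,H_\beta\rangle=\delta_{\alpha,\beta}$. The inclusion $\mathsf{Sym}\subset\mathsf{QSym}$ ($m_\mu=\sum_{\lambda(\alpha)=\mu}M_\alpha$) induces a map $\mathsf{Sym}^{(k)}\to\mathsf{QSym}^{(k)}$. $k$-conjugation: hook length of cell $(i,j)$ of $\kappa$ is $\kappa_i-j+\kappa'_j-i+1$;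 a $(k+1)$-core has no cell of hook length $k+1$; $p(\kappa)$ has $i$-th part the number of cells in row $i$ with hook length $\le k$; $p$ is a bijection from $(k+1)$-cores to $k$-bounded partitions with inverse $c$; $\lambda^{\omega_k}=p(c(\lambda)')$. For $k$-bounded $\mu\subseteq\lambda$, $\lambda/\mu$ is a horizontal $k$-strip if no two of its cells share a column, and $\mu^{\omega_k}\subseteq\lambda^{\omega_k}$ with no two cells of $\lambda^{\omega_k}/\mu^{\omega_k}$ in the same row. The $k$-Schur functions $\{s^{(k)}_\lambda\}$ are the basis of $\mathsf{Sym}_{(k)}$ with $s^{(k)}_\emptyset=1$ and $h_i s^{(k)}_\lambda=\sum_\mu s^{(k)}_\mu$ ($1\le i\le k$) over $\mu$ with $\mu/\lambda$ a horizontal $k$-strip of size $i$; the dual $k$-Schur functions $\{\mathfrak{S}^{(k)}_\lambda\}$ form the dual basis of $\mathsf{Sym}^{(k)}$. Box-adding operators: $t_1(\alpha)=[1,\alpha_1,\dots,\alpha_m]$; for $i\ge2$, $t_i(\alpha)$ replaces the leftmost part equal to $i-1$ by $i$ (undefined if none). $\beta//\alpha$ is a horizontal composition strip of size $n$ if $\beta=t_{i_n}\cdots t_{i_1}(\alpha)$ with $1\le i_1<\cdots<i_n$; for $k$-bounded $\alpha,\beta$ it is a horizontal $k$-composition strip if moreover $\lambda(\beta)/\lambda(\alpha)$ is a horizontal $k$-strip. $\{\mathbf{S}^{(k)}_\alpha\}$ is the unique basis of $\mathsf{NSym}_{(k)}$ with $\mathbf{S}^{(k)}_\emptyset=1$ and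 $H_i\mathbf{S}^{(k)}_\alpha=\sum_\beta\mathbf{S}^{(k)}_\beta$ ($1\le i\le k$) over $\beta$ with $\beta//\alpha$ a horizontal $k$-composition strip of size $i$; the quasi-symmetric affine Schur functions $\{\mathcal{S}^{(k)}_\alpha\}$ form the dual basis of $\mathsf{QSym}^{(k)}$. *)

From HB Require Import structures.
From mathcomp Require Import all_boot all_order all_algebra.
From mathcomp Require Import finmap.
From Stdlib Require Import ClassicalEpsilon.

Set Implicit Arguments.
Unset Strict Implicit.
Unset Printing Implicit Defensive.

Import GRing.Theory.

Definition pb (P : Prop) : bool :=
  if excluded_middle_informative P then true else false.

Definition is_comp (a : seq nat) : bool := all (fun x => 0 < x) a.
Definition kbounded (k : nat) (a : seq nat) : bool := all (fun x => x <= k) a.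
Definition is_part (l : seq nat) : bool := is_comp l && sorted geq l.
Definition kcomp (k : nat) (a : seq nat) : bool := is_comp a && kbounded k a.
Definition kpart (k : nat) (l : seq nat) : bool := is_part l && kbounded k l.

Definition lam_of (a : seq nat) : seq nat := sort geq a.

Fixpoint kcomps_fuel (k fuel n : nat) : seq (seq nat) :=
  if n == 0 then [:: [::]] else
  match fuel with
  | 0 => [::]
  | fuel'.+1 =>
      flatten [seq [seq i :: c | c <- kcomps_fuel k fuel' (n - i)]
              | i <- iota 1 (minn k n)]
  end.
Definition kcomps (k n : nat) : seq (seq nat) := kcomps_fuel k n n.
Definition kparts (k n : nat) : seq (seq nat) := [seq l <- kcomps k n | is_part l].

(* Cores and k-conjugation.  Rows/columns are 0-indexed below.               *)
Definition conjp (l : seq nat) : seq nat :=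
  [seq count (fun x => j < x) l | j <- iota 0 (head 0 l)].

(* hook length of cell (i,j) (0-indexed): kappa_i + kappa'_j - i - j - 1,
   i.e. kappa_i - j + kappa'_j - i + 1 in 1-indexed coordinates. *)
Definition hook (kap : seq nat) (i j : nat) : nat :=
  nth 0 kap i + nth 0 (conjp kap) j - i - j - 1.

Definition is_core (r : nat) (kap : seq nat) : bool :=
  is_part kap &&
  all (fun i => all (fun j => hook kap i j != r) (iota 0 (nth 0 kap i)))
      (iota 0 (size kap)).

Definition pk (k : nat) (kap : seq nat) : seq nat :=
  [seq count (fun j => hook kap i j <= k) (iota 0 (nth 0 kap i))
  | i <- iota 0 (size kap)].

(* kconj k l m  <->  m = l^{omega_k} = p(c(l)'), where c(l) is the (unique)
   (k+1)-core kap with p(kap) = l. *)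
Definition kconj (k : nat) (l m : seq nat) : Prop :=
  exists kap, is_core k.+1 kap /\ pk k kap = l /\ m = pk k (conjp kap).

(* l/m is a horizontal strip (m contained in l, no two cells in a column). *)
Definition hstrip (m l : seq nat) : Prop :=
  forall i, nth 0 m i <= nth 0 l i /\ nth 0 l i.+1 <= nth 0 m i.
(* l/m is a vertical strip (m contained in l, no two cells in a row). *)
Definition vstrip (m l : seq nat) : Prop :=
  forall i, nth 0 m i <= nth 0 l i <= (nth 0 m i).+1.

Definition hkstrip (k : nat) (m l : seq nat) : Prop :=
  [/\ kpart k m, kpart k l, hstrip m l &
      exists mw lw, [/\ kconj k m mw, kconj k l lw & vstrip mw lw]].

Fixpoint bump_first (v : nat) (a : seq nat) : option (seq nat) :=
  match a with
  | [::] => None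
  | x :: a' => if x == v then Some (v.+1 :: a')
               else omap (cons x) (bump_first v a')
  end.
Definition tbox (i : nat) (a : seq nat) : option (seq nat) :=
  match i with
  | 0 => None
  | 1 => Some (1 :: a)
  | i'.+1 => bump_first i' a
  end.
Fixpoint apply_tboxes (ix : seq nat) (a : seq nat) : option (seq nat) :=
  match ix with
  | [::] => Some a
  | i :: ix' => obind (apply_tboxes ix') (tbox i a)
  end.

Definition comp_strip (b a : seq nat) (n : nat) : Prop :=
  exists ix : seq nat, [/\ size ix = n, all (fun i => 0 < i) ix,
                           sorted ltn ix & apply_tboxes ix a = Some b].

Definition hkcomp_strip (k : nat) (b a : seq nat) (n : nat) : Prop :=
  [/\ kcomp k a, kcomp k b, comp_strip b a n & hkstrip k (lam_of a) (lam_of b)].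

(* Linear algebra: an element of each of Sym_(k), Sym^(k), NSym_(k),
   QSym^(k) is stored as its finitely supported coefficient function
   (on the bases h_mu, m_mu, H_beta, M_alpha respectively).                  *)
Definition Elt := {fsfun seq nat -> rat with 0%R}.

Local Open Scope ring_scope.

Definition supp_in (dom : pred (seq nat)) (f : Elt) : Prop :=
  forall x, x \in finsupp f -> dom x.

(* the unit element 1 = h_empty = H_empty *)
Definition is_one (f : Elt) : Prop := forall x, f x = (x == [::])%:R.

(* multiplication by h_i in Sym_(k) = Q[h_1..h_k] (h-basis coefficients):
   h_i h_mu = h_{mu cup i}. *)
Definition mulh (i : nat) (f : Elt) (nu : seq nat) : rat :=
  if i \in nu then f (rem i nu) else 0.
(* left multiplication by H_i in NSym_(k) (H-basis coefficients):
   H_i H_beta = H_{[i, beta]}. *)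
Definition mulH (i : nat) (f : Elt) (b : seq nat) : rat :=
  if b is j :: b' then (if j == i then f b' else 0) else 0.

Definition is_basis (dom : pred (seq nat)) (B : seq nat -> Elt) : Prop :=
  (forall x, dom x -> supp_in dom (B x)) /\
  (forall v : Elt, supp_in dom v ->
     exists! c : Elt, supp_in dom c /\
       forall z, v z = \sum_(x <- finsupp c) c x * B x z).

Definition is_kSchur (k : nat) (s : seq nat -> Elt) : Prop :=
  [/\ is_basis (kpart k) s, is_one (s [::]) &
      forall l i, kpart k l -> (0 < i <= k)%N -> forall nu, kpart k nu ->
        mulh i (s l) nu =
        \sum_(m <- kparts k (sumn l + i)%N | pb (hkstrip k l m)) s m nu].

(* pairing Sym^(k) x Sym_(k): <m_l, h_m> = delta *)
Definition pairS (k : nat) (F G : Elt) : rat :=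
  \sum_(x <- finsupp G | kpart k x) F x * G x.

Definition is_dual_kSchur (k : nat) (s D : seq nat -> Elt) : Prop :=
  (forall l, kpart k l -> supp_in is_part (D l)) /\
  (forall l m, kpart k l -> kpart k m -> pairS k (D l) (s m) = (l == m)%:R).

Definition is_ncSchur (k : nat) (S : seq nat -> Elt) : Prop :=
  [/\ is_basis (kcomp k) S, is_one (S [::]) &
      forall a i, kcomp k a -> (0 < i <= k)%N -> forall b, kcomp k b ->
        mulH i (S a) b =
        \sum_(c <- kcomps k (sumn a + i)%N | pb (hkcomp_strip k c a i)) S c b].

(* pairing QSym^(k) x NSym_(k): <M_a, H_b> = delta *)
Definition pairQ (k : nat) (F G : Elt) : rat :=
  \sum_(x <- finsupp G | kcomp k x) F x * G x.

Definition is_qaSchur (k : nat) (S Q : seq nat -> Elt) : Prop :=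
  (forall a, kcomp k a -> supp_in is_comp (Q a)) /\
  (forall a b, kcomp k a -> kcomp k b -> pairQ k (Q a) (S b) = (a == b)%:R).

(* the map Sym^(k) -> QSym^(k) induced by m_mu = sum_{lambda(a)=mu} M_a,
   on M-basis coefficients. *)
Definition toQSym (F : Elt) (a : seq nat) : rat :=
  if is_comp a then F (lam_of a) else 0.

(* equality in QSym^(k) (M_a with a part > k vanish) *)
Definition qeq (k : nat) (f g : seq nat -> rat) : Prop :=
  forall a, kcomp k a -> f a = g a.

(* Both sides obey the same recursion in the first part of the composition.
   Pairing with h_{lambda(alpha)} and using the Pieri rule for k-Schur
   functions gives D_l(lambda(i alpha)) = sum_mu D_mu(lambda(alpha)) [l/mu is a
   horizontal k-strip of size i]; dually the rule for H_i S_beta gives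
   Q_beta(i alpha) = sum_gamma Q_gamma(alpha) [beta//gamma is a horizontal
   k-composition strip of size i].  The recursions agree because, given a
   composition gamma and a horizontal strip l/lambda(gamma), there is exactly
   one horizontal composition strip beta//gamma with lambda(beta) = l: the
   operators t_j must be applied, in increasing order, exactly at the columns j
   where l has one more part >= j than gamma. *)

From mathcomp Require Import all_boot all_order all_algebra.
From mathcomp Require Import finmap zify.
From Stdlib Require Import ClassicalEpsilon.

Set Implicit Arguments.
Unset Strict Implicit.
Unset Printing Implicit Defensive.
Import GRing.Theory.

Definition count_ge (j : nat) (s : seq nat) : nat := count (leq j) s.

Lemma count_ge_monotone j1 j2 s : j1 <= j2 -> count_ge j2 s <= count_ge j1 s.
Proof. by move=> le12; apply: sub_count => y /= /(leq_trans le12). Qed.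

Lemma count_mem_count_ge v s : count_mem v s = count_ge v s - count_ge v.+1 s.
Proof.
elim: s => [|x s IH] //=; rewrite IH.
have le : count_ge v.+1 s <= count_ge v s by exact: count_ge_monotone.
by case: (ltngtP v x) => //= _; rewrite ?add1n ?subSS //; lia.
Qed.

Lemma count_ge_sumn s j : sumn s < j -> count_ge j s = 0.
Proof.
elim: s => [|x s IH] //= lt; rewrite IH; last exact: leq_ltn_trans (leq_addl _ _) lt.
by rewrite leqNgt (leq_ltn_trans (leq_addr _ _) lt).
Qed.

Lemma bump_first_count_ge v a a' : bump_first v a = Some a' ->
  forall j, count_ge j a' = count_ge j a + (j == v.+1).
Proof.
elim: a a' => [|x a IH] a' //=; case: eqP => [-> [<-] j | _] /=.
  rewrite addnAC; congr (_ + _).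
  case: (ltngtP j v.+1) => [le|gt|->] /=; last by rewrite ltnn.
    by rewrite -ltnS le.
  by rewrite leqNgt (ltnW gt).
by case: (bump_first v a) IH => [b|] // IH [<-] j /=; rewrite (IH b) // addnA.
Qed.

Lemma bump_first_sumn v a a' : bump_first v a = Some a' -> sumn a' = (sumn a).+1.
Proof.
elim: a a' => [|x a IH] a' //=; case: eqP => [-> [<-] | _] //=.
by case: (bump_first v a) IH => [b|] // IH [<-] /=; rewrite (IH b) ?addnS.
Qed.

Lemma bump_first_comp v a a' : bump_first v a = Some a' -> is_comp a -> is_comp a'.
Proof.
elim: a a' => [|x a IH] a' //=; case: eqP => [-> [<-] /andP[] //| _].
by case: (bump_first v a) IH => [b|] // IH [<-] /= /andP[-> /IH ->].
Qed.

Lemma bump_first_defined v a : v \in a -> exists a', bump_first v a = Some a'.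
Proof.
elim: a => [|x a IH] //=; rewrite in_cons eq_sym.
by case: eqP => [_|_ /IH [b ->]] /=; eauto.
Qed.

Lemma tbox_count_ge i a a' : tbox i a = Some a' ->
  forall j, 0 < j -> count_ge j a' = count_ge j a + (j == i).
Proof.
case: i => [|[|v]] //=; first by case=> <- [|[|j]] //=; rewrite addnC.
by move=> /bump_first_count_ge count_a' j _; rewrite count_a'.
Qed.

Lemma tbox_sumn i a a' : tbox i a = Some a' -> sumn a' = (sumn a).+1.
Proof. by case: i => [|[|v]] //= => [[<-] | /bump_first_sumn]. Qed.

Lemma tbox_comp i a a' : tbox i a = Some a' -> is_comp a -> is_comp a'.
Proof. by case: i => [|[|v]] //= => [[<-] | /bump_first_comp]. Qed.

Lemma tbox_defined i y : 0 < i ->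
  (1 < i -> count_ge i y < count_ge i.-1 y) -> exists y', tbox i y = Some y'.
Proof.
case: i => [|[|v]] //= _; first by eauto.
move=> lt; apply: bump_first_defined.
by rewrite -has_pred1 has_count count_mem_count_ge subn_gt0 lt.
Qed.

Lemma apply_tboxes_count_ge ix a a' : apply_tboxes ix a = Some a' ->
  forall j, 0 < j -> count_ge j a' = count_ge j a + count_mem j ix.
Proof.
elim: ix a => [|i ix IH] a /=; first by case=> -> j; rewrite addn0.
case E: (tbox i a) => [b|] //= /IH count_a' j j_gt0.
by rewrite count_a' // (tbox_count_ge E) // eq_sym addnA.
Qed.

Lemma apply_tboxes_sumn ix a a' :
  apply_tboxes ix a = Some a' -> sumn a' = sumn a + size ix.
Proof.
elim: ix a => [|i ix IH] a /=; first by case=> ->; rewrite addn0.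
case E: (tbox i a) => [b|] //= /IH ->.
by rewrite (tbox_sumn E) addnS addSn.
Qed.

Lemma apply_tboxes_comp ix a a' :
  apply_tboxes ix a = Some a' -> is_comp a -> is_comp a'.
Proof.
elim: ix a => [|i ix IH] a /=; first by case=> ->.
by case E: (tbox i a) => [b|] //= /IH comp_a' /(tbox_comp E).
Qed.

Lemma count_mem0_comp s : is_comp s -> count_mem 0 s = 0.
Proof. by move/allP=> pos_s; apply/count_memPn/negP => /pos_s. Qed.

Lemma perm_count_ge s1 s2 : is_comp s1 -> is_comp s2 ->
  (forall j, 0 < j -> count_ge j s1 = count_ge j s2) -> perm_eq s1 s2.
Proof.
move=> comp1 comp2 eq_count; apply/allP => v _ /=; apply/eqP.
case: v => [|v]; first by rewrite !count_mem0_comp.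
by rewrite !count_mem_count_ge !eq_count.
Qed.

Lemma geq_trans : transitive geq.
Proof. by move=> y x z /= le_yx le_zy; exact: leq_trans le_zy le_yx. Qed.

Lemma geq_anti : antisymmetric geq.
Proof. by move=> m n; rewrite /= andbC => /anti_leq. Qed.

Lemma geq_total : total geq.
Proof. by move=> m n; rewrite /= orbC leq_total. Qed.

Lemma count_ge_sorted s j i : sorted geq s -> 0 < j ->
  (j <= nth 0 s i) = (i < count_ge j s).
Proof.
elim: s i => [|x s IH] i /= sorted_s j_gt0; first by rewrite nth_nil; case: j j_gt0.
have sorted_s' : sorted geq s := path_sorted sorted_s.
case: (leqP j x) => [le_jx|lt_xj] /=.
  by case: i => [|i] /=; rewrite ?le_jx // IH // add1n ltnS.
have count_s : count_ge j s = 0.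
  apply/eqP; rewrite -leqn0 leqNgt -has_count; apply/hasPn => y /=.
  move/(allP (order_path_min geq_trans sorted_s)) => /= le_yx.
  by rewrite -ltnNge (leq_ltn_trans le_yx).
rewrite count_s; case: i => [|i] /=; first by rewrite leqNgt lt_xj.
by rewrite IH // count_s.
Qed.

Lemma hstrip_count_ge m l : sorted geq m -> sorted geq l -> hstrip m l ->
  forall j, 0 < j -> count_ge j m <= count_ge j l <= (count_ge j m).+1.
Proof.
move=> sorted_m sorted_l strip_ml j j_gt0; apply/andP; split.
  case E: (count_ge j m) => [|c] //.
  have : c < count_ge j m by rewrite E.
  rewrite -count_ge_sorted // => /leq_trans/(_ (proj1 (strip_ml c))).
  by rewrite count_ge_sorted.
case E: (count_ge j l) => [|[|c]] //.
have : c.+1 < count_ge j l by rewrite E.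
rewrite -count_ge_sorted // => /leq_trans/(_ (proj2 (strip_ml c))).
by rewrite count_ge_sorted.
Qed.

Lemma apply_tboxes_fill x l n : forall j0 y, 0 < j0 ->
  (forall j, 0 < j < j0 -> count_ge j y = count_ge j l) ->
  (forall j, j0 <= j -> count_ge j y = count_ge j x) ->
  (forall j, j0 <= j -> count_ge j x <= count_ge j l <= (count_ge j x).+1) ->
  (forall j, j0 + n <= j -> count_ge j x = count_ge j l) ->
  exists y', apply_tboxes [seq j <- iota j0 n | count_ge j l != count_ge j x] y
               = Some y' /\ forall j, 0 < j -> count_ge j y' = count_ge j l.
Proof.
elim: n => [|n IH] j0 y j0_gt0 low high strip top /=.
  exists y; split => // j j_gt0; case: (ltnP j j0) => [lt_jj0|le_j0j].
    by rewrite low ?j_gt0.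
  by rewrite high // top // addn0.
have top' j : j0.+1 + n <= j -> count_ge j x = count_ge j l.
  by rewrite addSnnS; exact: top.
have [le_xl le_lx] := andP (strip j0 (leqnn _)).
case: eqP => [eq_lx | /eqP ne_lx] /=.
  apply: IH => // [j /andP[j_gt0] | j /ltnW /high // | j /ltnW /strip //].
  rewrite ltnS leq_eqVlt => /orP[/eqP -> | lt_jj0]; first by rewrite high.
  by rewrite low ?j_gt0.
have add_box : count_ge j0 l = (count_ge j0 x).+1 by lia.
have [y1 box_y] : exists y1, tbox j0 y = Some y1.
  apply: tbox_defined => // j0_gt1.
  have pred_j0 : 0 < j0.-1 < j0 by lia.
  by rewrite high // low // -add_box count_ge_monotone // leq_pred.
rewrite box_y /=; apply: IH => // [j /andP[j_gt0] | j lt_j0j | j /ltnW /strip //].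
  rewrite ltnS leq_eqVlt (tbox_count_ge box_y) // => /orP[/eqP -> | lt_jj0].
    by rewrite eqxx high // addn1.
  by rewrite low ?j_gt0 // (ltn_eqF lt_jj0) addn0.
have j_gt0 : 0 < j by lia.
by rewrite (tbox_count_ge box_y) // high ?(ltnW lt_j0j) // (gtn_eqF lt_j0j) addn0.
Qed.

Lemma lam_of_sorted a : sorted geq (lam_of a).
Proof. exact: sort_sorted geq_total a. Qed.

Lemma perm_lam_of a : perm_eq (lam_of a) a.
Proof. by rewrite perm_sort. Qed.

Lemma lam_of_part c l : is_part l -> perm_eq c l -> lam_of c = l.
Proof.
case/andP=> _ sorted_l perm_cl.
apply: (sorted_eq geq_trans geq_anti (lam_of_sorted c) sorted_l).
exact: perm_trans (perm_lam_of c) perm_cl.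
Qed.

Lemma comp_strip_lift x l : is_comp x -> is_part l -> hstrip (lam_of x) l ->
  exists ix c, [/\ all (fun i => 0 < i) ix, sorted ltn ix,
                   apply_tboxes ix x = Some c & perm_eq c l].
Proof.
move=> comp_x /andP[comp_l sorted_l] strip_xl.
have count_x j : count_ge j (lam_of x) = count_ge j x by apply/permP/perm_lam_of.
have [] := @apply_tboxes_fill x l (sumn x + sumn l) 1 x.
- by [].
- by move=> j /andP[j_gt0 /leq_trans/(_ j_gt0)]; rewrite ltnn.
- by [].
- by move=> j j_gt0; rewrite -count_x hstrip_count_ge ?lam_of_sorted.
- by move=> j le_j; rewrite !count_ge_sumn //; lia.
move=> c [box_x count_c].
exists [seq j <- iota 1 (sumn x + sumn l) | count_ge j l != count_ge j x], c.
split => //.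
- by apply/allP => j; rewrite mem_filter mem_iota => /and3P[].
- by apply: sorted_filter; [exact: ltn_trans | exact: iota_ltn_sorted].
- exact: perm_count_ge (apply_tboxes_comp box_x comp_x) comp_l count_c.
Qed.

Lemma comp_strip_inj x ix ix' c c' :
  all (fun i => 0 < i) ix -> all (fun i => 0 < i) ix' -> sorted ltn ix -> sorted ltn ix' ->
  apply_tboxes ix x = Some c -> apply_tboxes ix' x = Some c' ->
  perm_eq c c' -> c = c'.
Proof.
move=> pos_ix pos_ix' sorted_ix sorted_ix' box_c box_c' perm_cc'.
suff eq_ix : ix = ix' by move: box_c; rewrite eq_ix box_c' => -[].
apply: (irr_sorted_eq ltn_trans ltnn) => // j.
have count_ix : count_mem j ix = count_mem j ix'.
  case: j => [|j]; first by rewrite !count_mem0_comp.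
  move/permP/(_ (leq j.+1)): perm_cc'; rewrite -!/(count_ge _ _).
  by rewrite (apply_tboxes_count_ge box_c) // (apply_tboxes_count_ge box_c') // => /addnI.
by rewrite -!has_pred1 !has_count count_ix.
Qed.

Lemma kcomp_cons k i a : kcomp k (i :: a) = [&& 0 < i, i <= k & kcomp k a].
Proof.
by rewrite /kcomp /is_comp /kbounded /=; case: (0 < i); case: (i <= k); rewrite /= ?andbF.
Qed.

Lemma mem_kcomps_fuel k fuel n x : n <= fuel ->
  (x \in kcomps_fuel k fuel n) = kcomp k x && (sumn x == n).
Proof.
have mem_nil y : (y \in [:: [::]]) = kcomp k y && (sumn y == 0).
  case: y => [|i y] //=; rewrite inE kcomp_cons addn_eq0.
  by case: (posnP i) => [->|] //=; rewrite andbF.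
elim: fuel n x => [|f IH] n x n_le /=.
  by move: n_le; rewrite leqn0 => /eqP ->; exact: mem_nil.
case: eqP => [-> | /eqP n_ne0]; first exact: mem_nil.
apply/flattenP/idP.
  move=> [_ /mapP[i /[!mem_iota] i_range ->] /mapP[c]].
  rewrite IH; last by lia.
  move=> /andP[kc_c /eqP sum_c] ->; rewrite kcomp_cons kc_c andbT /=.
  by apply/andP; split; [apply/andP; split | apply/eqP]; lia.
case: x => [|i c]; first by rewrite andbC eq_sym (negbTE n_ne0).
rewrite kcomp_cons => /andP[/and3P[i_gt0 i_le kc_c] /eqP /= sum_ic].
exists [seq i :: c0 | c0 <- kcomps_fuel k f (n - i)].
  by apply/mapP; exists i => //; rewrite mem_iota; lia.
by apply/mapP; exists c => //; rewrite IH; [rewrite kc_c /=; apply/eqP | ]; lia.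
Qed.

Lemma uniq_kcomps_fuel k fuel n : uniq (kcomps_fuel k fuel n).
Proof.
elim: fuel n => [|f IH] n /=; first by case: (n == 0).
case: (n == 0) => //; elim: (iota 1 (minn k n)) (iota_uniq 1 (minn k n)) => //= i r IHr.
case/andP=> i_notin_r /IHr uniq_r.
rewrite cat_uniq uniq_r andbT map_inj_uniq ?IH //=; last by move=> ? ? [].
apply/hasPn => _ /flattenP[_ /mapP[j j_in_r ->] /mapP[c _ ->]].
by apply/mapP => -[c' _ [eq_ij _]]; move: i_notin_r; rewrite -eq_ij j_in_r.
Qed.

Lemma mem_kcomps k n x : (x \in kcomps k n) = kcomp k x && (sumn x == n).
Proof. exact: mem_kcomps_fuel. Qed.

Lemma uniq_kcomps k n : uniq (kcomps k n).
Proof. exact: uniq_kcomps_fuel. Qed.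

Lemma mem_kparts k n x : (x \in kparts k n) = kpart k x && (sumn x == n).
Proof.
rewrite mem_filter mem_kcomps /kpart /kcomp /is_part.
by case: (is_comp x); case: (sorted geq x); case: (kbounded k x).
Qed.

Lemma uniq_kparts k n : uniq (kparts k n).
Proof. exact/filter_uniq/uniq_kcomps. Qed.

Lemma kpart_lam_of k x : kcomp k x -> kpart k (lam_of x).
Proof.
rewrite /kcomp /kpart /is_part /is_comp /kbounded !(perm_all _ (perm_lam_of x)).
by case/andP=> -> ->; rewrite lam_of_sorted.
Qed.

Lemma sumn_lam_of x : sumn (lam_of x) = sumn x.
Proof. exact/perm_sumn/perm_lam_of. Qed.

Lemma lam_of_cons i a z : is_part z ->
  (z == lam_of (i :: a)) = (i \in z) && (rem i z == lam_of a).
Proof.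
case/andP=> _ sorted_z.
have sorted_rem : sorted geq (rem i z) := subseq_sorted geq_trans (rem_subseq i z) sorted_z.
apply/eqP/andP => [eq_z | [i_in_z /eqP rem_z]].
  have i_in_z : i \in z by rewrite eq_z (perm_mem (perm_lam_of _)) mem_head.
  split=> //; apply/eqP; apply: (sorted_eq geq_trans geq_anti sorted_rem (lam_of_sorted a)).
  rewrite -(perm_cons i) -(permPl (perm_to_rem i_in_z)) eq_z.
  by rewrite (permPl (perm_lam_of _)) perm_cons perm_sym perm_lam_of.
apply: (sorted_eq geq_trans geq_anti sorted_z (lam_of_sorted _)).
rewrite (permPl (perm_to_rem i_in_z)) rem_z perm_sym (permPl (perm_lam_of _)).
by rewrite perm_cons perm_sym perm_lam_of.
Qed.

Lemma hkcomp_strip_sumn k c x i : hkcomp_strip k c x i -> sumn c = sumn x + i.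
Proof. by case=> _ _ [ix [<- _ _ /apply_tboxes_sumn]]. Qed.

Lemma hkcomp_strip_lift k x l i : kcomp k x -> kpart k l ->
  hkstrip k (lam_of x) l -> sumn l = sumn x + i ->
  exists c, hkcomp_strip k c x i /\ lam_of c = l.
Proof.
move=> kc_x kp_l strip_xl sum_l.
have /andP[part_l _] := kp_l; have /andP[comp_x _] := kc_x.
have [ix [c [pos_ix sorted_ix box_c perm_cl]]] :=
  comp_strip_lift comp_x part_l (let: And4 _ _ strip _ := strip_xl in strip).
have lam_c : lam_of c = l := lam_of_part part_l perm_cl.
have kc_c : kcomp k c.
  move: kp_l; rewrite /kpart /kcomp /is_part /is_comp /kbounded !(perm_all _ perm_cl).
  by case/andP=> /andP[-> _] ->.
exists c; split=> //; split=> //; last by rewrite lam_c.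
exists ix; split=> //; apply/eqP; rewrite -(eqn_add2l (sumn x)) -sum_l -(perm_sumn perm_cl).
by rewrite (apply_tboxes_sumn box_c).
Qed.

Lemma hkcomp_strip_inj k x i c c' : hkcomp_strip k c x i -> hkcomp_strip k c' x i ->
  lam_of c = lam_of c' -> c = c'.
Proof.
move=> [_ _ [ix [_ pos_ix sorted_ix box_c]] _] [_ _ [ix' [_ pos_ix' sorted_ix' box_c']] _].
move=> eq_lam; apply: comp_strip_inj pos_ix pos_ix' sorted_ix sorted_ix' box_c box_c' _.
by rewrite -(permPl (perm_lam_of c)) eq_lam perm_lam_of.
Qed.

Local Open Scope ring_scope.

Lemma pbP (P : Prop) : reflect P (pb P).
Proof. by rewrite /pb; case: excluded_middle_informative; constructor. Qed.

Lemma sum_delta (R : pzSemiRingType) (T : eqType) (r : seq T) (g : T -> R) x :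
  uniq r -> \sum_(m <- r) g m * (x == m)%:R = (x \in r)%:R * g x.
Proof.
elim: r => [|y r IH] /=; first by rewrite big_nil mul0r.
case/andP=> y_notin_r /IH {}IH; rewrite big_cons IH in_cons.
case: (eqVneq x y) => [->|_] /=; last by rewrite mulr0 add0r.
by rewrite (negbTE y_notin_r) mulr1 mul0r addr0 mul1r.
Qed.

Lemma count_hkcomp_strips k x l i : kcomp k x -> kpart k l ->
  \sum_(c <- kcomps k (sumn x + i) | pb (hkcomp_strip k c x i)) (lam_of c == l)%:R
  = (pb (hkstrip k (lam_of x) l) && (sumn l == sumn x + i)%N)%:R :> rat.
Proof.
move=> kc_x kp_l; rewrite big_mkcond /=.
case: (boolP (_ && _)) => [/andP[/pbP strip_xl /eqP sum_l] | no_strip].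
  have [c0 [strip_c0 lam_c0]] := hkcomp_strip_lift kc_x kp_l strip_xl sum_l.
  rewrite (eq_bigr (fun c => 1 * (c0 == c)%:R)); last first.
    move=> c _; rewrite mul1r; case: (eqVneq c0 c) => [<-|ne_c0c].
      by rewrite (introT (pbP _) strip_c0) lam_c0 eqxx.
    case: pbP => // strip_c; case: eqP => // lam_c; case/eqP: ne_c0c.
    by apply: hkcomp_strip_inj strip_c0 strip_c _; rewrite lam_c lam_c0.
  rewrite sum_delta ?uniq_kcomps // mem_kcomps.
  by rewrite (hkcomp_strip_sumn strip_c0) eqxx; case: strip_c0 => _ -> _ _; rewrite mulr1.
rewrite big1 // => c _; case: pbP => // strip_c; case: eqP => // lam_c.
case/negP: no_strip; apply/andP; split; first by apply/pbP; case: strip_c => _ _ _; rewrite lam_c.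
by rewrite -lam_c sumn_lam_of (hkcomp_strip_sumn strip_c).
Qed.

Lemma eq_big_uniq_nz (R : nmodType) (T : eqType) (F : T -> R) (r1 r2 : seq T) :
  uniq r1 -> uniq r2 -> (forall x, F x != 0 -> (x \in r1) = (x \in r2)) ->
  \sum_(x <- r1) F x = \sum_(x <- r2) F x.
Proof.
move=> uniq_r1 uniq_r2 same_nz.
have drop0 r : \sum_(x <- r) F x = \sum_(x <- [seq x <- r | F x != 0]) F x.
  by rewrite big_filter [RHS]big_mkcond; apply: eq_bigr => x _; case: (eqVneq (F x) 0).
rewrite (drop0 r1) (drop0 r2); apply/perm_big/uniq_perm; rewrite ?filter_uniq // => x.
by rewrite !mem_filter; case: (boolP (F x != 0)) => //= /same_nz.
Qed.

Definition pairing (dom : pred (seq nat)) (F G : Elt) : rat :=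
  \sum_(x <- finsupp G | dom x) F x * G x.

Lemma pairingE (dom : pred (seq nat)) (F G : Elt) (X : seq (seq nat)) :
  uniq X -> {subset finsupp G <= X} ->
  pairing dom F G = \sum_(x <- X | dom x) F x * G x.
Proof.
move=> uniq_X supp_G; rewrite /pairing !(big_mkcond dom).
apply: eq_big_uniq_nz => // [|x]; first exact: fset_uniq.
case: (dom x) => //; rewrite mulf_eq0 negb_or => /andP[_ Gx_nz].
have x_supp : x \in finsupp G by rewrite mem_finsupp.
by rewrite x_supp supp_G.
Qed.

Lemma pairing_sum (dom : pred (seq nat)) (F v : Elt)
    (I : eqType) (r : seq I) (f : I -> rat) (B : I -> Elt) :
  (forall z, dom z -> v z = \sum_(m <- r) f m * B m z) ->
  pairing dom F v = \sum_(m <- r) f m * pairing dom F (B m).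
Proof.
move=> v_sum.
set X := undup (finsupp v ++ flatten [seq finsupp (B m) : seq _ | m <- r]).
have uniq_X : uniq X := undup_uniq _.
rewrite (pairingE _ _ uniq_X); last by move=> x x_supp; rewrite mem_undup mem_cat x_supp.
have pairing_B m : m \in r -> pairing dom F (B m) = \sum_(x <- X | dom x) F x * B m x.
  move=> m_in_r; apply: pairingE => // x x_supp; rewrite mem_undup mem_cat.
  by apply/orP; right; apply/flattenP; exists (finsupp (B m) : seq _) => //; apply: map_f.
rewrite [RHS](eq_big_seq (fun m => f m * \sum_(x <- X | dom x) F x * B m x)); last first.
  by move=> m /pairing_B ->.
rewrite (eq_bigr (fun x => \sum_(m <- r) F x * (f m * B m x))); last first.
  by move=> x dom_x; rewrite v_sum // mulr_sumr.
rewrite exchange_big /=; apply: eq_bigr => m _; rewrite mulr_sumr.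
by apply: eq_bigr => x _; rewrite mulrCA.
Qed.

Definition unitv (a : seq nat) : Elt := [fsfun x in [fset a]%fset => (x == a)%:R].

Lemma unitvE a z : unitv a z = (z == a)%:R.
Proof. by rewrite fsfunE inE; case: eqP. Qed.

Lemma pairing_unitv (dom : pred (seq nat)) (F G : Elt) a :
  (forall z, G z = (z == a)%:R) -> dom a -> pairing dom F G = F a.
Proof.
move=> G_a dom_a; rewrite (pairingE _ _ (X := [:: a])) //.
  by rewrite big_cons dom_a big_nil G_a eqxx mulr1 addr0.
by move=> x; rewrite mem_finsupp G_a inE; case: (x == a); rewrite ?eqxx.
Qed.

Section GradedEnumeration.

Variables (dom : pred (seq nat)) (L : nat -> seq (seq nat)).
Hypothesis mem_L : forall n y, (y \in L n) = dom y && (sumn y == n)%N.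
Hypothesis uniq_L : forall n, uniq (L n).

Definition upto (N : nat) : seq (seq nat) := flatten [seq L n | n <- iota 0 N.+1].

Lemma mem_upto N x : (x \in upto N) = dom x && (sumn x <= N)%N.
Proof.
apply/flattenP/andP => [[_ /mapP[n n_le ->]] | [dom_x sum_x]].
  by rewrite mem_L => /andP[-> /eqP sum_x]; move: n_le; rewrite mem_iota -sum_x.
by exists (L (sumn x)); [apply: map_f; rewrite mem_iota | rewrite mem_L dom_x eqxx].
Qed.

Lemma uniq_upto N : uniq (upto N).
Proof.
rewrite /upto; elim: (iota 0 N.+1) (iota_uniq 0 N.+1) => //= n r IH /andP[n_notin_r uniq_r].
rewrite cat_uniq uniq_L IH // andbT; apply/hasPn => y /flattenP[_ /mapP[m m_in_r ->]].
rewrite !mem_L => /andP[_ /eqP sum_m]; apply/negP => /andP[_ /eqP sum_n].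
by move: n_notin_r; rewrite -sum_n sum_m m_in_r.
Qed.

Lemma dual_expansion (B E : seq nat -> Elt) (v : Elt) :
  is_basis dom B ->
  (forall b m, dom b -> dom m -> pairing dom (E b) (B m) = (b == m)%:R) ->
  supp_in dom v ->
  exists N0, forall N, (N0 <= N)%N ->
    forall z, v z = \sum_(x <- upto N) pairing dom (E x) v * B x z.
Proof.
move=> [_ basis_B] dual_E dom_v.
have [c [[dom_c v_c] _]] := basis_B v dom_v.
have coef_c x : dom x -> pairing dom (E x) v = c x.
  move=> dom_x; rewrite (@pairing_sum dom _ v _ (finsupp c) c B (fun z _ => v_c z)).
  rewrite (eq_big_seq (fun m => c m * (x == m)%:R)); last by move=> m /dom_c ?; rewrite dual_E.
  rewrite sum_delta ?fset_uniq // mem_finsupp.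
  by case: eqP => [->|]; rewrite ?mul0r ?mul1r.
exists (\max_(m <- finsupp c) sumn m)%N => N N_ge z.
rewrite (eq_big_seq (fun x => c x * B x z)); last first.
  by move=> x; rewrite mem_upto => /andP[/coef_c ->].
rewrite v_c; apply: eq_big_uniq_nz; rewrite ?fset_uniq ?uniq_upto // => x.
rewrite mulf_eq0 negb_or => /andP[cx_nz _].
have x_supp : x \in finsupp c by rewrite mem_finsupp.
rewrite x_supp mem_upto dom_c //=; apply/esym/(leq_trans _ N_ge).
exact: (leq_bigmax_seq x x_supp).
Qed.

End GradedEnumeration.

Lemma mem_kcomps_upto k N x : (x \in upto (kcomps k) N) = kcomp k x && (sumn x <= N)%N.
Proof. exact/mem_upto/mem_kcomps. Qed.

Lemma mem_kparts_upto k N x : (x \in upto (kparts k) N) = kpart k x && (sumn x <= N)%N.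
Proof. exact/mem_upto/mem_kparts. Qed.

Lemma uniq_kcomps_upto k N : uniq (upto (kcomps k) N).
Proof. exact/(uniq_upto (mem_kcomps k))/uniq_kcomps. Qed.

Lemma uniq_kparts_upto k N : uniq (upto (kparts k) N).
Proof. exact/(uniq_upto (mem_kparts k))/uniq_kparts. Qed.

Lemma sum_kparts_lam_of k N (G : seq nat -> seq nat -> rat) :
  \sum_(mu <- upto (kparts k) N) \sum_(x <- kcomps k (sumn mu) | lam_of x == mu) G x mu
  = \sum_(x <- upto (kcomps k) N) G x (lam_of x).
Proof.
symmetry; rewrite (eq_big_seq (fun x =>
  \sum_(mu <- upto (kparts k) N) G x mu * (lam_of x == mu)%:R)).
  rewrite exchange_big /=; apply: eq_big_seq => mu; rewrite mem_kparts_upto => /andP[kp_mu sum_mu].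
  rewrite [RHS]big_mkcond [RHS](eq_bigr (fun x => G x mu * (lam_of x == mu)%:R)) /=; last first.
    by move=> x _; case: eqP; rewrite ?mulr1 ?mulr0.
  apply: eq_big_uniq_nz; rewrite ?uniq_kcomps_upto ?uniq_kcomps // => x.
  case: (eqVneq (lam_of x) mu) => [lam_x _ | _]; last by rewrite mulr0 eqxx.
  move: sum_mu; rewrite -lam_x sumn_lam_of mem_kcomps_upto mem_kcomps => ->.
  by rewrite eqxx.
move=> x; rewrite mem_kcomps_upto => /andP[kc_x sum_x].
rewrite sum_delta ?uniq_kparts_upto // mem_kparts_upto kpart_lam_of //.
by rewrite sumn_lam_of sum_x mul1r.
Qed.

Lemma mulH_unitv i a z : mulH i (unitv a) z = unitv (i :: a) z.
Proof. by case: z => [|j z] /=; rewrite !unitvE // eqseq_cons; case: eqP. Qed.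

Lemma mulh_unitv i a z :
  is_part z -> mulh i (unitv (lam_of a)) z = unitv (lam_of (i :: a)) z.
Proof. by move=> part_z; rewrite /mulh !unitvE lam_of_cons //; case: (i \in z). Qed.

Lemma mulH_sum i (F : Elt) (I : Type) (r : seq I) (f : I -> rat) (B : I -> Elt) :
  (forall z, F z = \sum_(x <- r) f x * B x z) ->
  forall z, mulH i F z = \sum_(x <- r) f x * mulH i (B x) z.
Proof.
move=> F_sum [|j z] /=; last case: eqP => _; rewrite ?F_sum //.
all: by rewrite big1 // => x _; rewrite mulr0.
Qed.

Lemma mulh_sum i (F : Elt) (I : Type) (r : seq I) (f : I -> rat) (B : I -> Elt) :
  (forall z, F z = \sum_(x <- r) f x * B x z) ->
  forall z, mulh i F z = \sum_(x <- r) f x * mulh i (B x) z.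
Proof.
move=> F_sum z; rewrite /mulh; case: (i \in z) => //.
by rewrite big1 // => x _; rewrite mulr0.
Qed.

Section DualBases.

Variables (k : nat) (s D S Q : seq nat -> Elt).
Hypotheses (kSchur_s : is_kSchur k s) (dual_D : is_dual_kSchur k s D).
Hypotheses (ncSchur_S : is_ncSchur k S) (qaSchur_Q : is_qaSchur k S Q).

Lemma pairing_D_s l m :
  kpart k l -> kpart k m -> pairing (kpart k) (D l) (s m) = (l == m)%:R.
Proof. exact: dual_D.2. Qed.

Lemma pairing_Q_S b c :
  kcomp k b -> kcomp k c -> pairing (kcomp k) (Q b) (S c) = (b == c)%:R.
Proof. exact: qaSchur_Q.2. Qed.

Lemma dual_kSchur_coef l v : kpart k v -> D l v = pairing (kpart k) (D l) (unitv v).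
Proof. by move=> kp_v; rewrite (pairing_unitv _ (unitvE v)). Qed.

Lemma qaSchur_coef b a : kcomp k a -> Q b a = pairing (kcomp k) (Q b) (unitv a).
Proof. by move=> kc_a; rewrite (pairing_unitv _ (unitvE a)). Qed.

Lemma dual_kSchur_nil l : kpart k l -> D l [::] = (l == [::])%:R.
Proof.
have [_ one_s _] := kSchur_s.
by move=> kp_l; rewrite -(pairing_unitv (dom := kpart k) _ one_s) ?pairing_D_s.
Qed.

Lemma qaSchur_nil b : kcomp k b -> Q b [::] = (b == [::])%:R.
Proof.
have [_ one_S _] := ncSchur_S.
by move=> kc_b; rewrite -(pairing_unitv (dom := kcomp k) _ one_S) ?pairing_Q_S.
Qed.

Lemma kSchur_expansion v : kpart k v -> exists N0, forall N, (N0 <= N)%N ->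
  forall z, unitv v z = \sum_(x <- upto (kparts k) N) D x v * s x z.
Proof.
move=> kp_v; have [basis_s _ _] := kSchur_s.
have [|N0 expand_v] :=
  dual_expansion (mem_kparts k) (uniq_kparts k) (v := unitv v) basis_s pairing_D_s.
  by move=> x; rewrite mem_finsupp unitvE; case: (eqVneq x v) => [->|]; rewrite ?eqxx.
exists N0 => N N_ge z; rewrite (expand_v N N_ge); apply: eq_big_seq => x.
by rewrite mem_kparts_upto => /andP[kp_x _]; rewrite dual_kSchur_coef.
Qed.

Lemma ncSchur_expansion a : kcomp k a -> exists N0, forall N, (N0 <= N)%N ->
  forall z, unitv a z = \sum_(x <- upto (kcomps k) N) Q x a * S x z.
Proof.
move=> kc_a; have [basis_S _ _] := ncSchur_S.
have [|N0 expand_a] :=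
  dual_expansion (mem_kcomps k) (uniq_kcomps k) (v := unitv a) basis_S pairing_Q_S.
  by move=> x; rewrite mem_finsupp unitvE; case: (eqVneq x a) => [->|]; rewrite ?eqxx.
exists N0 => N N_ge z; rewrite (expand_a N N_ge); apply: eq_big_seq => x.
by rewrite mem_kcomps_upto => /andP[kc_x _]; rewrite qaSchur_coef.
Qed.

Section Recursion.

Variables (i : nat) (a : seq nat) (N : nat).
Hypotheses (i_range : (0 < i <= k)%N) (kc_a : kcomp k a).
Hypothesis expand_S :
  forall z, unitv a z = \sum_(x <- upto (kcomps k) N) Q x a * S x z.
Hypothesis expand_s : forall z,
  unitv (lam_of a) z = \sum_(mu <- upto (kparts k) N) D mu (lam_of a) * s mu z.

Lemma qaSchur_cons b : kcomp k b ->
  Q b (i :: a) = \sum_(x <- upto (kcomps k) N) Q x a *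
    \sum_(c <- kcomps k (sumn x + i) | pb (hkcomp_strip k c x i)) (b == c)%:R.
Proof.
move=> kc_b; have [_ _ strips_S] := ncSchur_S.
have kc_ia : kcomp k (i :: a) by rewrite kcomp_cons andbA i_range.
pose strips := [seq (x, c) | x <- upto (kcomps k) N,
                 c <- [seq c <- kcomps k (sumn x + i) | pb (hkcomp_strip k c x i)]].
rewrite qaSchur_coef //.
rewrite (@pairing_sum _ _ _ _ strips (fun p => Q p.1 a) (fun p => S p.2)).
  rewrite /strips big_allpairs_dep; apply: eq_bigr => x _; rewrite big_filter mulr_sumr.
  rewrite [LHS]big_seq_cond [RHS]big_seq_cond; apply: eq_bigr => c /andP[].
  by rewrite mem_kcomps => /andP[kc_c _] _; rewrite pairing_Q_S.
move=> z kc_z; rewrite -mulH_unitv (mulH_sum _ expand_S) /strips big_allpairs_dep /=.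
apply: eq_big_seq => x; rewrite mem_kcomps_upto => /andP[kc_x _].
by rewrite strips_S // big_filter mulr_sumr.
Qed.

Lemma qaSchur_cons_lam_of l : kpart k l ->
  \sum_(b <- kcomps k (sumn l) | lam_of b == l) Q b (i :: a) =
  \sum_(x <- upto (kcomps k) N) Q x a *
    (pb (hkstrip k (lam_of x) l) && (sumn l == sumn x + i)%N)%:R.
Proof.
move=> kp_l; rewrite big_seq_cond.
rewrite (eq_bigr (fun b => \sum_(x <- upto (kcomps k) N) Q x a *
  \sum_(c <- kcomps k (sumn x + i) | pb (hkcomp_strip k c x i)) (b == c)%:R)); last first.
  by move=> b /andP[/[!mem_kcomps] /andP[kc_b _] _]; rewrite qaSchur_cons.
rewrite -big_seq_cond exchange_big /=; apply: eq_big_seq => x.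
rewrite mem_kcomps_upto => /andP[kc_x _]; rewrite -mulr_sumr exchange_big /=.
rewrite -count_hkcomp_strips //; congr (_ * _).
rewrite [LHS]big_seq_cond [RHS]big_seq_cond; apply: eq_bigr => c /andP[].
rewrite mem_kcomps => /andP[kc_c /eqP sum_c] _.
rewrite big_mkcond (eq_bigr (fun b => (lam_of b == l)%:R * (c == b)%:R)); last first.
  by move=> b _; case: (lam_of b == l); rewrite ?mul1r ?mul0r // eq_sym.
rewrite sum_delta ?uniq_kcomps // mem_kcomps kc_c /=.
case: (eqVneq (lam_of c) l) => [<-|_]; last by rewrite mulr0.
by rewrite sumn_lam_of eqxx mulr1.
Qed.

Lemma dual_kSchur_cons l : kpart k l ->
  D l (lam_of (i :: a)) = \sum_(mu <- upto (kparts k) N) D mu (lam_of a) *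
    (pb (hkstrip k mu l) && (sumn l == sumn mu + i)%N)%:R.
Proof.
move=> kp_l; have [_ _ strips_s] := kSchur_s.
have kc_ia : kcomp k (i :: a) by rewrite kcomp_cons andbA i_range.
pose strips := [seq (mu, nu) | mu <- upto (kparts k) N,
                 nu <- [seq nu <- kparts k (sumn mu + i) | pb (hkstrip k mu nu)]].
rewrite dual_kSchur_coef ?kpart_lam_of //.
rewrite (@pairing_sum _ _ _ _ strips (fun p => D p.1 (lam_of a)) (fun p => s p.2)).
  rewrite /strips big_allpairs_dep; apply: eq_big_seq => mu.
  rewrite mem_kparts_upto => /andP[kp_mu _]; rewrite big_filter /= -mulr_sumr; congr (_ * _).
  rewrite big_mkcond (eq_big_seq (fun nu => (pb (hkstrip k mu nu))%:R * (l == nu)%:R)).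
    by rewrite sum_delta ?uniq_kparts // mem_kparts kp_l -natrM mulnb andbC.
  move=> nu /[!mem_kparts] /andP[kp_nu _].
  by rewrite pairing_D_s //; case: (pb _); rewrite ?mul1r ?mul0r.
move=> z kp_z; rewrite -mulh_unitv; last by case/andP: kp_z.
rewrite (mulh_sum _ expand_s) /strips big_allpairs_dep /=.
apply: eq_big_seq => mu; rewrite mem_kparts_upto => /andP[kp_mu _].
by rewrite strips_s // big_filter mulr_sumr.
Qed.

End Recursion.

Lemma dual_kSchur_lam_of a : kcomp k a -> forall l, kpart k l ->
  D l (lam_of a) = \sum_(b <- kcomps k (sumn l) | lam_of b == l) Q b a.
Proof.
elim: a => [|i a IH] kc_a l kp_l.
  rewrite dual_kSchur_nil // big_mkcond.
  rewrite (eq_big_seq (fun b => (lam_of b == l)%:R * ([::] == b)%:R)) => [|b].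
    by rewrite sum_delta ?uniq_kcomps // mem_kcomps; case: l kp_l => [|y l] _ /=; rewrite ?mulr0.
  rewrite mem_kcomps => /andP[kc_b _]; rewrite qaSchur_nil //.
  by case: (lam_of b == l); rewrite ?mul1r ?mul0r // eq_sym.
have [i_range kc_a'] : (0 < i <= k)%N /\ kcomp k a.
  by move: kc_a; rewrite kcomp_cons andbA => /andP[].
have [N1 expand_S] := ncSchur_expansion kc_a'.
have [N2 expand_s] := kSchur_expansion (kpart_lam_of kc_a').
rewrite (dual_kSchur_cons i_range kc_a' (expand_s _ (leq_maxr N1 N2)) kp_l).
rewrite (qaSchur_cons_lam_of i_range kc_a' (expand_S _ (leq_maxl N1 N2)) kp_l).
under [RHS]eq_bigr => x _ do rewrite -[sumn x]sumn_lam_of.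
rewrite -(sum_kparts_lam_of _ _ (fun x mu =>
  Q x a * (pb (hkstrip k mu l) && (sumn l == sumn mu + i)%N)%:R)).
by apply: eq_big_seq => mu /[!mem_kparts_upto] /andP[kp_mu _]; rewrite IH // mulr_suml.
Qed.

End DualBases.

Theorem mainTheorem8 (k : nat) (hk : (1 <= k)%N)
  (s D S Q : seq nat -> Elt) :
  is_kSchur k s -> is_dual_kSchur k s D ->
  is_ncSchur k S -> is_qaSchur k S Q ->
  forall l : seq nat, kpart k l ->
    qeq k (toQSym (D l))
          (fun a => \sum_(b <- kcomps k (sumn l) | lam_of b == l) Q b a).
Proof.
move=> kSchur_s dual_D ncSchur_S qaSchur_Q l kp_l a kc_a.
have /andP[comp_a _] := kc_a; rewrite /toQSym comp_a.
exact: dual_kSchur_lam_of kSchur_s dual_D ncSchur_S qaSchur_Q a kc_a l kp_l.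
Qed.
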